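(* Let $n \ge 2$ and let $(G(k))_{k \in \mathbb{N}}$, $G(k)=(\mathcal{V},\mathcal{E}(k))$, be a sequence of digraphs on $\mathcal{V}=\{1,\dots,n\}$, with knowledge sets $\mathcal{K}_i(k)$ evolving by the flooding update described in the context. Fix a node $q \in \mathcal{V}$. Suppose that for every $k \in \{0,1,\dots,n-2\}$ there exists an input-cord $\mathcal{I}^q(k)$ to node $q$ at time $k$ with $|\mathcal{I}^q(k)| \ge n-k-1$. Then $|\mathcal{K}_q(k+1)| \ge k+2$ for every $k \in \{0,1,\dots,n-2\}$.
   Context: Network: $\mathcal{V}=\{1,\dots,n\}$; each node $i$ holds initial data $d_i \in \mathbb{R}$, with $d_i \neq d_j$ for $i\neq j$. Communication happens at discrete times $k \in \mathbb{N}$ along a time-varying digraph $G(k)=(\mathcal{V},\mathcal{E}(k))$; node $i$ sends to node $j$ at time $k$ iff $(i,j)\in\mathcal{E}(k)$. Knowledge sets: $\mathcal{K}_i(0)=\{d_i\}$, and (flooding update) each node's knowledge at time $k+1$ is its knowledge at time $k$ together with the full knowledge at time $k$ of every node sending to it: $\mathcal{K}_j(k+1)=\mathcal{K}_j(k)\cup\bigcup_{i:(i,j)\in\mathcal{E}(k)}\mathcal{K}_i(k)$. Input-cord: for a node $i$ and time $k$, an input-cord to $i$ is an ordered list $\mathcal{I}^i(k)=(\mathcal{I}^i_1(k),\dots,\mathcal{I}^i_m(k))$ of pairwise distinct nodes of $\mathcal{V}\setminus\{i\}$ such that $(\mathcal{I}^i_j(k),\mathcal{I}^i_{j+1}(k))\in\mathcal{E}(k)$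 for all $j\in\{1,\dots,m-1\}$ and $(\mathcal{I}^i_m(k),i)\in\mathcal{E}(k)$; its cardinality is $|\mathcal{I}^i(k)|=m$. *)

From HB Require Import structures.
From mathcomp Require Import all_boot all_order all_algebra.
From mathcomp Require Import finmap.
From mathcomp Require Import reals.
Set Implicit Arguments. Unset Strict Implicit. Unset Printing Implicit Defensive.
Local Open Scope fset_scope.

(* Nodes are 'I_n (i.e. {1..n} shifted to {0..n-1}).
   A time-varying digraph is E : nat -> rel 'I_n, with
   E k i j  <=>  (i,j) \in E(k)  (node i sends to node j at time k). *)

Fixpoint knowledge (R : realType) (n : nat) (E : nat -> rel 'I_n)
    (d : 'I_n -> R) (k : nat) (j : 'I_n) : {fset R} :=
  match k with
  | 0 => [fset d j]
  | k'.+1 => knowledge E d k' j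
             `|` \bigcup_(i <- enum 'I_n | E k' i j) knowledge E d k' i
  end.

(* s = (I_1, ..., I_m) is an input-cord to node i at time k:
   pairwise distinct nodes of V \ {i}, with (I_j, I_{j+1}) \in E(k)
   and (I_m, i) \in E(k); i.e. the sequence s followed by i is an E(k)-path. *)
Definition input_cord (n : nat) (E : nat -> rel 'I_n) (k : nat) (i : 'I_n)
    (s : seq 'I_n) : bool :=
  [&& uniq s, i \notin s & sorted (E k) (rcons s i)].

(* Let [B s] be the set of nodes from which [q] can be reached by a time-respecting
   path during the last [s] steps before time [t].  Flooding puts [d j] into
   [K_q(t)] for every [j] in [B t], so by injectivity of [d] it suffices to show
   [s < #|B s|].  Going one step further back, either [B] strictly grows, or the
   whole input-cord at that time lies in [B s]: a cord leaving [B s] would cross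
   into it along an edge and so enlarge [B].  In the latter case [B s] contains
   the cord and [q], hence at least [n - t + s + 1 >= s + 2] nodes. *)
From HB Require Import structures.
From mathcomp Require Import all_boot all_order all_algebra.
From mathcomp Require Import finmap.
From mathcomp Require Import reals.
From mathcomp Require Import zify.
Set Implicit Arguments. Unset Strict Implicit. Unset Printing Implicit Defensive.
Local Open Scope fset_scope.

Lemma sorted_rcons_cross (T : eqType) (e : rel T) (a : pred T) (s : seq T) x :
  sorted e (rcons s x) -> ~~ all a s -> a x ->
  exists y z, [/\ ~~ a y, a z & e y z].
Proof.
move=> + + ax; elim: s => [|b s IH] //= path_b.
case: (boolP (all a s)) => [all_s | not_all_s] nab; last first.
  exact: IH (path_sorted path_b) not_all_s.
rewrite andbT in nab; exists b, (head x s); split => //.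
- by case: s all_s {IH path_b} => //= c s /andP [].
- by case: s {IH all_s} path_b => [|c s] /= /andP [].
Qed.

Section Flooding.
Variables (R : realType) (n : nat) (E : nat -> rel 'I_n) (d : 'I_n -> R).
Local Notation K := (knowledge E d).

Lemma knowledge_subS t j : K t j `<=` K t.+1 j.
Proof. exact: fsubsetUl. Qed.

Lemma knowledge_edge t i j : E t i j -> K t i `<=` K t.+1 j.
Proof.
move=> Eij; apply: fsubset_trans (fsubsetUr _ _).
by apply: bigfcup_sup; rewrite ?mem_enum.
Qed.

Variables (q : 'I_n) (t : nat).

Fixpoint reach_back (s : nat) : {set 'I_n} :=
  if s is s'.+1 then
    (reach_back s' :|: [set j | [exists i in reach_back s', E (t - s) j i]])%SET
  else [set q].

Local Notation B := reach_back.

Lemma reach_back_self s : q \in B s.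
Proof. by elim: s => [|s IH] /=; rewrite ?set11 // in_setU IH. Qed.

Lemma reach_back_subS s : (B s \subset B s.+1)%SET.
Proof. exact: subsetUl. Qed.

Lemma knowledge_reach_back s j :
  (s <= t)%N -> j \in B s -> K (t - s) j `<=` K t q.
Proof.
elim: s j => [|s IH] j le_st /=; first by rewrite subn0 in_set1 => /eqP ->.
have step : t - s = (t - s.+1).+1 by rewrite subnSK.
rewrite in_setU in_set => /orP [/(IH _ (ltnW le_st)) | /existsP [i /andP [Bi Eji]]].
  by apply: fsubset_trans; rewrite step knowledge_subS.
apply: fsubset_trans (IH _ (ltnW le_st) Bi).
by rewrite step; apply: knowledge_edge.
Qed.

Lemma card_reach_back_knowledge : injective d -> (#|B t| <= #|` K t q|)%N.
Proof.
move=> d_inj; rewrite cardE -(size_map d).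
apply: uniq_leq_size; first by rewrite (map_inj_uniq d_inj) enum_uniq.
move=> _ /mapP [j + ->]; rewrite mem_enum => /(knowledge_reach_back (leqnn t)).
by rewrite subnn => /fsubsetP; apply; rewrite fset11.
Qed.

Lemma reach_back_grow s c : input_cord E (t - s.+1) q c ->
  (#|B s| < #|B s.+1|)%N || (size c < #|B s|)%N.
Proof.
case/and3P=> uniq_c q_notin_c sorted_c.
case: (boolP (all (mem (B s)) c)) => [c_in_B | /(sorted_rcons_cross sorted_c)].
  apply/orP; right; rewrite cardE -[(size c).+1]/(size (q :: c)).
  apply: uniq_leq_size; first by rewrite /= q_notin_c uniq_c.
  move=> z; rewrite inE mem_enum => /orP [/eqP -> | ]; first exact: reach_back_self.
  by move/allP: c_in_B; apply.
case/(_ (reach_back_self s)) => y [z [By Bz Eyz]].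
apply/orP; left; apply: proper_card; apply/properP; split; first exact: reach_back_subS.
exists y => //; rewrite in_setU in_set; apply/orP; right.
by apply/existsP; exists z; apply/andP.
Qed.

Lemma card_reach_back (lt_tn : (t < n)%N) :
  (forall u, (u < t)%N -> exists c, input_cord E u q c /\ (n - u - 1 <= size c)%N) ->
  forall s, (s <= t)%N -> (s < #|B s|)%N.
Proof.
move=> cords; elim=> [|s IH] le_st; first by rewrite cards1.
have [c [cord_c size_c]] :
    exists c, input_cord E (t - s.+1) q c /\ (n - (t - s.+1) - 1 <= size c)%N.
  by apply: cords; lia.
have le_card_S := subset_leq_card (reach_back_subS s).
case/orP: (reach_back_grow cord_c) => [grow | big].
  exact: leq_ltn_trans (IH (ltnW le_st)) grow.
lia.
Qed.

End Flooding.

Theorem lemma1 (R : realType) (n : nat) (hn : (2 <= n)%N)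
    (E : nat -> rel 'I_n) (d : 'I_n -> R) (hd : injective d) (q : 'I_n) :
  (forall k : nat, (k <= n - 2)%N ->
     exists s : seq 'I_n, input_cord E k q s /\ (n - k - 1 <= size s)%N) ->
  forall k : nat, (k <= n - 2)%N -> (k + 2 <= #|` knowledge E d k.+1 q|)%N.
Proof.
move=> cords k le_kn.
apply: leq_trans (card_reach_back_knowledge E q k.+1 hd).
rewrite addn2; apply: card_reach_back => //; first by lia.
by move=> u lt_uk; apply: cords; lia.
Qed.
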